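(* Consider the control-affine system $\dot\zeta = \hat F(\zeta) + \hat G(\zeta)\upsilon$ with $\zeta\in\mathbb{R}^n$, $\upsilon\in\mathbb{R}^q$, and let $\theta:\mathbb{R}^n\to\mathbb{R}$ be a continuously differentiable bounded function. Fix a constant vector $d\in\mathbb{R}^n$ and constants $r>0$, $\Delta>0$, and define $$\Theta(\zeta) := \exp\!\Big(\frac{\theta(\zeta)}{\|\zeta+d\|+r}-\Delta\Big)-1 .$$ Suppose that (A1) $\theta$ has relative degree $m\ge 2$ with respect to the system, and (A2) $G_d(\zeta):=(\zeta+d)^T\hat G(\zeta)\neq 0$ along the trajectories for all $t\ge t_0$. Then $\Theta$ has relative degree $1$ with respect to the system, and the set $\bar C_\Theta:=\{\zeta\in\mathbb{R}^n:\Theta(\zeta)\ge 0\}$ is forward invariant (for the closed loop under controls satisfying the control barrier condition $L_{\hat F}\Theta(\zeta)+L_{\hat G}\Theta(\zeta)\upsilon+\alpha(\Theta(\zeta))\ge 0$ for some class $\mathcal K$ function $\alpha$).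
   Context: $\hat F:\mathbb{R}^n\to\mathbb{R}^n$ and $\hat G:\mathbb{R}^n\to\mathbb{R}^{n\times q}$ are locally Lipschitz. $L_{\hat F}$, $L_{\hat G}$ denote Lie derivatives along $\hat F$ and $\hat G$. The relative degree of a function $h$ with respect to the system is the minimal number of time differentiations of $h$ along the system dynamics after which the control $\upsilon$ appears explicitly. A set $S$ is forward invariant if every trajectory starting in $S$ at $t_0$ remains in $S$ for all $t\ge t_0$. A class $\mathcal K$ function is a continuous strictly increasing function $\alpha:[0,a)\to[0,\infty)$ with $\alpha(0)=0$. *)

From HB Require Import structures.
From mathcomp Require Import all_boot all_order all_algebra.
From mathcomp Require Import all_classical all_reals all_analysis.
Set Implicit Arguments. Unset Strict Implicit. Unset Printing Implicit Defensive.
Import Order.TTheory GRing.Theory Num.Theory.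
Import numFieldNormedType.Exports.
Local Open Scope ring_scope.
Local Open Scope classical_set_scope.

Section Defs.
Variables (R : realType) (n q : nat).

Definition enorm (x : 'cV[R]_n) : R := Num.sqrt (\sum_(i < n) (x i 0) ^+ 2).

Definition lieF (F : 'cV[R]_n -> 'cV[R]_n) (h : 'cV[R]_n -> R) : 'cV[R]_n -> R :=
  fun x => 'D_(F x) h x.

Definition lieG (G : 'cV[R]_n -> 'M[R]_(n, q)) (h : 'cV[R]_n -> R)
    (x : 'cV[R]_n) : 'rV[R]_q :=
  \row_(j < q) 'D_(col j (G x)) h x.

Definition lieGu (G : 'cV[R]_n -> 'M[R]_(n, q)) (h : 'cV[R]_n -> R)
    (x : 'cV[R]_n) (v : 'cV[R]_q) : R :=
  (lieG G h x *m v) 0 0.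

Definition rel_degree (F : 'cV[R]_n -> 'cV[R]_n) (G : 'cV[R]_n -> 'M[R]_(n, q))
    (h : 'cV[R]_n -> R) (m : nat) : Prop :=
  (0 < m)%N /\
  (forall k : nat, (k < m.-1)%N -> forall x, lieG G (iter k (lieF F) h) x = 0) /\
  (exists x, lieG G (iter m.-1 (lieF F) h) x != 0).

End Defs.

Definition locally_lipschitz (R : realType) (U V : normedModType R) (f : U -> V) : Prop :=
  forall x : U, exists e : R, 0 < e /\ exists L : R,
    forall y z : U, ball x e y -> ball x e z -> `|f y - f z| <= L * `|y - z|.

Definition C1 (R : realType) (n : nat) (h : 'cV[R]_n -> R) : Prop :=
  (forall x, differentiable h x) /\ (forall v, continuous (fun x => 'D_v h x)).

(* extended class-K function (needed since the barrier condition is imposed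
   also where Theta may be negative) *)
Definition ext_classK (R : realType) (alpha : R -> R) : Prop :=
  continuous alpha /\ (forall x y, x < y -> alpha x < alpha y) /\ alpha 0 = 0.

Definition Theta (R : realType) (n : nat) (theta : 'cV[R]_n -> R) (d : 'cV[R]_n)
    (r Delta : R) (z : 'cV[R]_n) : R :=
  expR (theta z / (enorm (z + d) + r) - Delta) - 1.

From HB Require Import structures.
From mathcomp Require Import all_boot all_order all_algebra.
From mathcomp Require Import all_classical all_reals all_analysis.
From mathcomp Require Import ring lra.
Import Order.TTheory GRing.Theory Num.Theory.
Import numFieldNormedType.Exports.
Local Open Scope ring_scope.
Local Open Scope classical_set_scope.

(* Relative degree m >= 2 means L_G theta = 0, so in L_G Theta only the
   denominator |z + d| + r is differentiated: L_G Theta(z) is a nonzero multiple of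
   theta(z) (z + d)^T G(z). On {Theta >= 0} we have theta > 0, hence (A2) gives
   L_G Theta != 0 there, and Theta has relative degree 1.
   For invariance, f := Theta o zeta satisfies f' >= - alpha(f) > 0 wherever f < 0.
   Were f(t1) < 0, the minimum of f on [t0, t1] would be negative and attained at
   some c > t0; the mean value theorem on a short interval [s, c] on which f < 0
   gives f(c) > f(s), a contradiction. *)

Section ForwardInvariance.
Set Implicit Arguments.
Unset Strict Implicit.
Variable R : realType.

Lemma forward_invariant_ge0 (f df : R -> R) (t0 : R) :
  {within `[t0, +oo[, continuous f} ->
  (forall t, t0 < t -> is_derive t 1 f (df t)) ->
  (forall t, t0 < t -> f t < 0 -> 0 < df t) ->
  0 <= f t0 -> forall t, t0 <= t -> 0 <= f t.
Proof.
move=> fcont fder df_pos f0 t1 t0_le_t1; rewrite leNgt; apply/negP => ft1.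
have t0_lt_t1 : t0 < t1 by rewrite lt_def t0_le_t1 andbT; apply: contraTneq ft1 => ->; rewrite -leNgt.
have sub01 : `[t0, t1] `<=` `[t0, +oo[ by move=> s; rewrite /= !in_itv /= => /andP[->].
have [c cI cmin] := EVT_min (ltW t0_lt_t1) (continuous_subspaceW sub01 fcont).
move: (cI); rewrite in_itv /= => /andP[t0_le_c ct1].
have fc_neg : f c < 0 by apply: le_lt_trans (cmin t1 _) ft1; rewrite in_itv /= t0_le_t1 lexx.
have t0_lt_c : t0 < c by rewrite lt_def t0_le_c andbT; apply: contraTneq fc_neg => ->; rewrite -leNgt.
have [/derivable1_diffP/differentiable_continuous fc _] := fder c t0_lt_c.
have [e /= e_gt0 f_neg] := iffLR (nbhs_ballP _ _) (cvgr_lt _ fc _ fc_neg).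
pose s := Num.max ((t0 + c) / 2) (c - e / 2).
have t0s : t0 < s by rewrite lt_max; apply/orP; left; lra.
have sc : s < c by rewrite gt_max; apply/andP; split; lra.
have ces : c - e / 2 <= s by rewrite le_max lexx orbT.
have f'_sc y : y \in `]s, c[%R -> is_derive y 1 f (df y).
  by rewrite in_itv /= => /andP[sy _]; apply: fder; lra.
have f_sc : {within `[s, c], continuous f}.
  by apply: continuous_subspaceW fcont => y; rewrite /= !in_itv /= andbT => /andP[sy _]; lra.
have [xi xiI mvt] := MVT sc f'_sc f_sc.
move: xiI; rewrite in_itv /= => /andP[sxi xic].
have fxi_neg : f xi < 0 by apply: f_neg; rewrite /ball /= ger0_norm; lra.
have : f c <= f s by apply: cmin; rewrite in_itv /=; apply/andP; split; lra.
have := df_pos xi (lt_trans t0s sxi) fxi_neg.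
have : 0 < c - s by rewrite subr_gt0.
nra.
Qed.

End ForwardInvariance.

Section LieDerivatives.
Set Implicit Arguments.
Unset Strict Implicit.
Variables (R : realType) (n q : nat).

Lemma is_derive_coord (x w : 'cV[R]_n) i :
  is_derive x w (fun y : 'cV[R]_n => y i 0) (w i 0).
Proof.
have dM : derivable (@id 'cV[R]_n) x w by [].
apply: DeriveDef; first by move/derivable_mxP : dM; apply.
by have := derive_mx dM; rewrite derive_val => /matrixP/(_ i 0); rewrite mxE => ->.
Qed.

Lemma is_derive_comp_real (V : normedModType R) (f : V -> R) (g : R -> R) x w df b :
  differentiable f x -> is_derive x w f df -> is_derive (f x) 1 g b ->
  is_derive x w (g \o f) (b * df).
Proof.
move=> dfx [_ <-] [/derivable1_diffP dg <-].
have dgf : differentiable (g \o f) x by apply: differentiable_comp.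
apply: DeriveDef; first exact: diff_derivable.
by rewrite deriveE // diff_comp //= diff1E // derive1E !deriveE // mulrC.
Qed.

Lemma is_derive_inv (V : normedModType R) (f : V -> R) x w df :
  f x != 0 -> is_derive x w f df ->
  is_derive x w (fun y => (f y)^-1) (- (f x)^-2 * df).
Proof.
move=> fx0 [df' <-]; apply: DeriveDef; first exact: derivableV.
by rewrite deriveV.
Qed.

Lemma is_derive_comp_path (h : 'cV[R]_n -> R) (z : R -> 'cV[R]_n) t w :
  differentiable h (z t) -> is_derive t 1 z w -> is_derive t 1 (h \o z) ('d h (z t) w).
Proof.
move=> dh [dz <-]; have /derivable1_diffP dz' := dz.
have dhz : differentiable (h \o z) t by apply: differentiable_comp.
apply: DeriveDef; first exact/derivable1_diffP.
by rewrite deriveE // diff_comp //= (deriveE _ dz').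
Qed.

Lemma mulmx_sum_col (A : 'M[R]_(n, q)) (v : 'cV[R]_q) :
  A *m v = \sum_(j < q) v j 0 *: col j A.
Proof.
apply/matrixP => i k; rewrite (ord1 k) !mxE summxE; apply: eq_bigr => j _.
by rewrite !mxE mulrC.
Qed.

Lemma trmx_mul_neq0 (v : 'cV[R]_n) (A : 'M[R]_(n, q)) : v^T *m A != 0 -> v != 0.
Proof. by apply: contra => /eqP ->; rewrite trmx0 mul0mx. Qed.

Lemma lieGu_diff (G : 'cV[R]_n -> 'M[R]_(n, q)) h x v :
  differentiable h x -> lieGu G h x v = 'd h x (G x *m v).
Proof.
move=> dh; rewrite /lieGu /lieG mulmx_sum_col linear_sum !mxE.
by apply: eq_bigr => j _; rewrite !mxE linearZ /= deriveE // mulrC.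
Qed.

Lemma lieG_eq0_derive (G : 'cV[R]_n -> 'M[R]_(n, q)) h x j :
  lieG G h x = 0 -> 'D_(col j (G x)) h x = 0.
Proof. by move/matrixP/(_ 0 j); rewrite !mxE. Qed.

Lemma rel_degree_lieG_eq0 F (G : 'cV[R]_n -> 'M[R]_(n, q)) h m x :
  (2 <= m)%N -> rel_degree F G h m -> lieG G h x = 0.
Proof. by move=> m_ge2 [_ [LG0 _]]; apply: (LG0 0%N); rewrite -subn1 subn_gt0. Qed.

Lemma is_derive_lie_path F (G : 'cV[R]_n -> 'M[R]_(n, q)) h
    (z : R -> 'cV[R]_n) (v : R -> 'cV[R]_q) t :
  differentiable h (z t) -> is_derive t 1 z (F (z t) + G (z t) *m v t) ->
  is_derive t 1 (h \o z) (lieF F h (z t) + lieGu G h (z t) (v t)).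
Proof.
move=> dh dz; have := is_derive_comp_path dh dz.
by rewrite linearD /= lieGu_diff // /lieF (deriveE _ dh).
Qed.

End LieDerivatives.

Section ThetaDerivative.
Set Implicit Arguments.
Unset Strict Implicit.
Variables (R : realType) (n : nat) (d : 'cV[R]_n) (theta : 'cV[R]_n -> R) (r Delta : R).
Hypothesis r_gt0 : 0 < r.

Definition sqnorm_shift (y : 'cV[R]_n) : R := \sum_(i < n) ((y + d) i 0) ^+ 2.

Lemma sqnorm_shiftE :
  sqnorm_shift = \sum_(i < n) (fun y : 'cV[R]_n => y i 0 + d i 0) ^+ 2.
Proof.
rewrite fct_sumE; apply/funext => y; apply: eq_bigr => i _.
by rewrite exprfctE mxE.
Qed.

Lemma sqnorm_shift_gt0 x : x + d != 0 -> 0 < sqnorm_shift x.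
Proof.
move=> xd0; rewrite lt_def sumr_ge0 ?andbT => [|i _]; last exact: sqr_ge0.
apply: contra xd0 => /eqP/psumr_eq0P sq0; apply/eqP/matrixP => i j.
rewrite (ord1 j) [RHS]mxE; apply/eqP; rewrite -sqrf_eq0; apply/eqP.
by apply: sq0 => // k _; exact: sqr_ge0.
Qed.

Lemma differentiable_sqnorm_shift x : differentiable sqnorm_shift x.
Proof.
rewrite sqnorm_shiftE; apply: differentiable_sum => i.
apply: (differentiableX 1); apply: differentiableD; first exact: differentiable_coord.
exact: differentiable_cst.
Qed.

Lemma is_derive_sqnorm_shift x w :
  is_derive x w sqnorm_shift (2 * ((x + d)^T *m w) 0 0).
Proof.
rewrite sqnorm_shiftE; apply: is_derive_eq.
  apply: is_derive_sum => i.
  have di : is_derive x w (fun y : 'cV[R]_n => y i 0 + d i 0) (w i 0 + 0).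
    exact: is_deriveD (is_derive_coord x w i) (is_derive_cst _ _ _).
  exact: is_deriveX di.
rewrite mxE mulr_sumr; apply: eq_bigr => i _.
by rewrite !mxE addr0 expr1 mulrA.
Qed.

Lemma is_derive_enorm_shift x w : x + d != 0 ->
  is_derive x w (fun y => enorm (y + d)) (((x + d)^T *m w) 0 0 / enorm (x + d)).
Proof.
move=> /sqnorm_shift_gt0 S_gt0; apply: is_derive_eq.
  apply: (is_derive_comp_real (differentiable_sqnorm_shift x)).
    exact: is_derive_sqnorm_shift.
  exact: is_derive1_sqrt.
by rewrite invfM mulrACA mulVf ?pnatr_eq0 // mul1r mulrC.
Qed.

Lemma differentiable_enorm_shift x : x + d != 0 ->
  differentiable (fun y => enorm (y + d)) x.
Proof.
move=> /sqnorm_shift_gt0 S_gt0.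
apply: (differentiable_comp (g := Num.sqrt) (differentiable_sqnorm_shift x)).
by apply/derivable1_diffP; have [] := is_derive1_sqrt S_gt0.
Qed.

Lemma enorm_shift_addr_gt0 y : 0 < enorm (y + d) + r.
Proof. exact: ltr_wpDl (sqrtr_ge0 _) r_gt0. Qed.

Definition Theta_exponent (y : 'cV[R]_n) : R := theta y / (enorm (y + d) + r) - Delta.

Lemma ThetaE : Theta theta d r Delta = (expR \o Theta_exponent) - cst 1.
Proof. by []. Qed.

Lemma differentiable_Theta_exponent x : differentiable theta x -> x + d != 0 ->
  differentiable Theta_exponent x.
Proof.
move=> dtheta xd0; apply: differentiableB; last exact: differentiable_cst.
apply: differentiableM => //; apply: differentiableV.
  by apply: differentiableD; [exact: differentiable_enorm_shift|exact: differentiable_cst].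
exact/lt0r_neq0/enorm_shift_addr_gt0.
Qed.

Lemma differentiable_Theta x : differentiable theta x -> x + d != 0 ->
  differentiable (Theta theta d r Delta) x.
Proof.
move=> dtheta xd0; rewrite ThetaE; apply: differentiableB; last exact: differentiable_cst.
apply: differentiable_comp; first exact: differentiable_Theta_exponent.
exact/derivable1_diffP/derivable_expR.
Qed.

Lemma derive_Theta x w : differentiable theta x -> x + d != 0 -> 'D_w theta x = 0 ->
  'D_w (Theta theta d r Delta) x =
  - expR (Theta_exponent x) * theta x / (enorm (x + d) + r) ^+ 2
    * (((x + d)^T *m w) 0 0 / enorm (x + d)).
Proof.
move=> dtheta xd0 Dtheta0.
have Nr_neq0 := lt0r_neq0 (enorm_shift_addr_gt0 x).
have dN := is_deriveD (is_derive_enorm_shift w xd0) (is_derive_cst r x w).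
have dth : is_derive x w theta 0 by apply: DeriveDef; [exact: diff_derivable|].
have dinv := is_derive_inv (f := fun y => enorm (y + d) + r) Nr_neq0 dN.
have dexp := is_deriveB (is_deriveM dth dinv) (is_derive_cst Delta x w).
have := is_deriveB (is_derive_comp_real (differentiable_Theta_exponent dtheta xd0) dexp
  (is_derive_expR _)) (is_derive_cst (1 : R) x w).
move=> dTheta; rewrite ThetaE (@derive_val _ _ _ _ _ _ _ dTheta) /=.
by rewrite scaler0 !subr0 !addr0 -[theta x *: _]/(theta x * _); ring.
Qed.

Lemma Theta_ge0_theta_gt0 x : 0 < Delta -> 0 <= Theta theta d r Delta x -> 0 < theta x.
Proof.
move=> Delta_gt0; rewrite /Theta subr_ge0 -(expR0 R) ler_expR subr_ge0 => ge_Delta.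
have : 0 < theta x / (enorm (x + d) + r) by apply: lt_le_trans ge_Delta.
by rewrite pmulr_lgt0 // invr_gt0; exact: enorm_shift_addr_gt0.
Qed.

Lemma lieG_Theta_neq0 (q : nat) (G : 'cV[R]_n -> 'M[R]_(n, q)) x :
  differentiable theta x -> theta x != 0 -> lieG G theta x = 0 ->
  (x + d)^T *m G x != 0 -> lieG G (Theta theta d r Delta) x != 0.
Proof.
move=> dtheta theta_neq0 LGtheta0 xdG_neq0.
have xd0 := trmx_mul_neq0 xdG_neq0.
have N_gt0 : 0 < enorm (x + d) by rewrite sqrtr_gt0; exact: sqnorm_shift_gt0.
have coef_neq0 : - expR (Theta_exponent x) * theta x / (enorm (x + d) + r) ^+ 2 != 0.
  have E_neq0 := lt0r_neq0 (expR_gt0 (Theta_exponent x)).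
  have Nr_neq0 := lt0r_neq0 (enorm_shift_addr_gt0 x).
  by rewrite !mulf_neq0 ?oppr_eq0 ?invr_eq0 ?expf_neq0.
apply: contra xdG_neq0 => /eqP LGTheta0; apply/eqP/matrixP => i j.
have := lieG_eq0_derive j LGTheta0.
rewrite derive_Theta ?(lieG_eq0_derive j LGtheta0) // => /eqP.
rewrite mulf_eq0 (negbTE coef_neq0) mulf_eq0 invr_eq0 (gt_eqF N_gt0) orbF => /eqP dot0.
by rewrite (ord1 i) [RHS]mxE -dot0 !mxE; apply: eq_bigr => k _; rewrite !mxE.
Qed.

End ThetaDerivative.

Theorem lemma2 (R : realType) (n q : nat)
  (F : 'cV[R]_n -> 'cV[R]_n) (G : 'cV[R]_n -> 'M[R]_(n, q))
  (theta : 'cV[R]_n -> R) (d : 'cV[R]_n) (r Delta : R) (m : nat)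
  (alpha : R -> R) (t0 : R) (zeta : R -> 'cV[R]_n) (u : R -> 'cV[R]_q) :
  locally_lipschitz F -> locally_lipschitz G ->
  C1 theta -> (exists M : R, forall z, `|theta z| <= M) ->
  0 < r -> 0 < Delta ->
  (* (A1) *)
  (2 <= m)%N -> rel_degree F G theta m ->
  (* closed-loop trajectory on [t0, +oo) *)
  {within `[t0, +oo[, continuous zeta} ->
  (forall t, t0 < t -> is_derive t 1 zeta (F (zeta t) + G (zeta t) *m u t)) ->
  (* (A2) along the trajectory *)
  (forall t, t0 <= t -> (zeta t + d)^T *m G (zeta t) != 0) ->
  (* control barrier condition with a class-K function alpha *)
  ext_classK alpha ->
  (forall t, t0 <= t ->
     lieF F (Theta theta d r Delta) (zeta t)
     + lieGu G (Theta theta d r Delta) (zeta t) (u t)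
     + alpha (Theta theta d r Delta (zeta t)) >= 0) ->
  (* start in the set C_Theta *)
  0 <= Theta theta d r Delta (zeta t0) ->
  rel_degree F G (Theta theta d r Delta) 1 /\
  (forall t, t0 <= t ->
     0 <= Theta theta d r Delta (zeta t) /\
     lieG G (Theta theta d r Delta) (zeta t) != 0).
Proof.
move=> _ _ [dtheta _] _ r_gt0 Delta_gt0 m_ge2 rdeg zeta_cont zeta_der A2
  [_ [alpha_incr alpha0]] barrier Theta0.
set Th := Theta theta d r Delta.
have dTh t : t0 <= t -> differentiable Th (zeta t).
  by move=> /A2/trmx_mul_neq0; exact: differentiable_Theta.
pose dTh_path s := lieF F Th (zeta s) + lieGu G Th (zeta s) (u s).
have Th_path_cont : {within `[t0, +oo[, continuous (Th \o zeta)}.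
  apply: within_continuous_comp => // _ /set_mem[s s_ge0 <-].
  by apply/differentiable_continuous/dTh; move: s_ge0; rewrite /= in_itv /= andbT.
have Th_path_der s : t0 < s -> is_derive s 1 (Th \o zeta) (dTh_path s).
  by move=> t0s; exact: is_derive_lie_path (dTh s (ltW t0s)) (zeta_der s t0s).
have Th_path_incr s : t0 < s -> Th (zeta s) < 0 -> 0 < dTh_path s.
  move=> t0s Th_neg; have : alpha (Th (zeta s)) < 0 by rewrite -alpha0; exact: alpha_incr.
  by have := barrier s (ltW t0s); rewrite /dTh_path /Th; lra.
have invariant := forward_invariant_ge0 Th_path_cont Th_path_der Th_path_incr Theta0.
have LGTh t : t0 <= t -> lieG G Th (zeta t) != 0.
  move=> t0t; apply: lieG_Theta_neq0 => //; last exact: A2.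
  - exact/lt0r_neq0/(Theta_ge0_theta_gt0 _ Delta_gt0)/invariant.
  - exact: rel_degree_lieG_eq0 m_ge2 rdeg.
split; last by move=> t t0t; split; [exact: invariant|exact: LGTh].
by split=> //; split=> //; exists (zeta t0); exact: LGTh.
Qed.
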